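(* For every integer $k\ge 2$, \[\overline{\alpha}(\{1,k,k+1\})=\begin{cases}\frac{2k}{6k+3} & k\equiv 0\pmod 3,\\ \frac13 & k\equiv 1\pmod 3,\\ \frac{k+1}{3k+6} & k\equiv 2\pmod 3.\end{cases}\]
   Context: For a finite set $S$ of positive integers, the distance graph $G(S)$ has vertex set $\mathbb{Z}$, with $i,j$ adjacent iff $|i-j|\in S$. The density of $A\subseteq\mathbb{Z}$ is $\delta(A)=\limsup_{N\to\infty}\frac{|A\cap[-N,N]|}{2N+1}$, and the independence ratio $\overline{\alpha}(S)$ is the supremum of $\delta(A)$ over independent sets $A$ of $G(S)$. *)

From Stdlib Require Import Reals ZArith List Lia.
From Coquelicot Require Import Coquelicot.
Open Scope R_scope.

(* A subset of Z, given by its characteristic function (classically every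
   subset of Z has one). *)
Definition zset := Z -> bool.

Definition count_in (A : zset) (N : nat) : nat :=
  length (filter A (map (fun i : nat => (Z.of_nat i - Z.of_nat N)%Z)
                        (seq 0 (2 * N + 1)))).

Definition density (A : zset) : Rbar :=
  LimSup_seq (fun N => INR (count_in A N) / INR (2 * N + 1)).

Definition independent (S : list Z) (A : zset) : Prop :=
  forall i j : Z, A i = true -> A j = true -> ~ In (Z.abs (i - j)) S.

Definition is_independence_ratio (S : list Z) (r : R) : Prop :=
  Rbar_is_lub (fun x : Rbar => exists A, independent S A /\ density A = x)
              (Finite r).

(* Let A be independent in G({1, k, k+1}) and interleave it with its translate by k:
   h(2m+1) = A(m), h(2m) = A(m+k).  The forbidden distances 1, k, k+1 of A become the
   distances 1 and 2 in h, and h has the same density as A.  A set with no two points at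
   distance 1 or 2 has density at most 1/3, which settles k = 3m+1.  For k = 3m, independence
   also forbids the distance 2k = 3(2m) in h, so every window of length 6m+1 contains at most
   2m points of h.  For k = 3m+2, every odd point j of h has the even "echo" j - (2k+1) in h.
   Cutting an interval at its last odd point leaves a tail of even points at mutual distance
   at least 4, and a block [j - (2k+1), j] of at most (2k+2)/3 points that starts at an even
   point; induction on such blocks bounds the density of h by (k+1)/(3k+6).  The matching
   lower bounds come from periodic sets. *)

From Stdlib Require Import Reals ZArith List Lia Lra.
From Coquelicot Require Import Coquelicot.

Open Scope Z_scope.

Lemma interval_ind (P : Z -> Z -> Prop) :
  (forall s t, (forall s' t', 0 <= t' - s' < t - s -> P s' t') -> P s t) ->
  forall s t, P s t.
Proof.
  intros step.
  assert (bounded : forall n s t, t - s <= Z.of_nat n -> P s t).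
  { induction n as [|n IH]; intros s t Hn; apply step; intros s' t' Hlen.
    - lia.
    - apply IH; lia. }
  intros s t. apply (bounded (Z.to_nat (t - s))). lia.
Qed.

Fixpoint count_from (f : zset) (s : Z) (n : nat) : nat :=
  match n with
  | O => O
  | S n => (count_from f s n + if f (s + Z.of_nat n)%Z then 1 else 0)%nat
  end.

Definition cnt (f : zset) (a b : Z) : Z := Z.of_nat (count_from f a (Z.to_nat (b - a))).

Lemma count_from_add f s n m :
  count_from f s (n + m) = (count_from f s n + count_from f (s + Z.of_nat n) m)%nat.
Proof.
  induction m as [|m IH]; cbn [count_from].
  - now rewrite !Nat.add_0_r.
  - rewrite Nat.add_succ_r. cbn [count_from]. rewrite IH.
    replace (s + Z.of_nat (n + m)) with (s + Z.of_nat n + Z.of_nat m) by lia.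
    destruct (f _); lia.
Qed.

Lemma cnt_nonneg f a b : 0 <= cnt f a b.
Proof. unfold cnt. lia. Qed.

Lemma cnt_split f a b c : a <= b <= c -> cnt f a c = cnt f a b + cnt f b c.
Proof.
  intros Habc. unfold cnt.
  replace (Z.to_nat (c - a)) with (Z.to_nat (b - a) + Z.to_nat (c - b))%nat by lia.
  rewrite count_from_add, Nat2Z.inj_add. do 3 f_equal. lia.
Qed.

Lemma cnt_empty f a b : b <= a -> cnt f a b = 0.
Proof. intros Hba. unfold cnt. now replace (Z.to_nat (b - a)) with 0%nat by lia. Qed.

Lemma cnt_single f a : cnt f a (a + 1) = if f a then 1 else 0.
Proof.
  unfold cnt. replace (Z.to_nat (a + 1 - a)) with 1%nat by lia.
  cbn. rewrite Z.add_0_r. now destruct (f a).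
Qed.

Lemma cnt_le_length f a b : a <= b -> cnt f a b <= b - a.
Proof.
  intros Hab. unfold cnt.
  enough (forall n, (count_from f a n <= n)%nat) by (specialize (H (Z.to_nat (b - a))); lia).
  induction n as [|n IH]; cbn; [lia|]. destruct (f _); lia.
Qed.

Lemma cnt_mono f a b a' b' : a' <= a -> a <= b -> b <= b' -> cnt f a b <= cnt f a' b'.
Proof.
  intros. rewrite (cnt_split f a' a b'), (cnt_split f a b b') by lia.
  pose proof (cnt_nonneg f a' a). pose proof (cnt_nonneg f b b'). lia.
Qed.

Lemma cnt_ext f g a b : (forall i, a <= i < b -> f i = g i) -> cnt f a b = cnt g a b.
Proof.
  intros Hfg. unfold cnt. f_equal.
  assert (Hn : forall i, a <= i < a + Z.of_nat (Z.to_nat (b - a)) -> f i = g i)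
    by (intros; apply Hfg; lia).
  revert Hn. generalize (Z.to_nat (b - a)) as n.
  induction n as [|n IH]; intros Hn; cbn; [reflexivity|].
  rewrite IH, Hn by (try intros; try apply Hn; lia). reflexivity.
Qed.

Lemma cnt_zero f a b : (forall i, a <= i < b -> f i = false) -> cnt f a b = 0.
Proof.
  intros Hf. rewrite (cnt_ext f (fun _ => false)) by exact Hf. unfold cnt.
  induction (Z.to_nat (b - a)) as [|n IH]; cbn; lia.
Qed.

Lemma count_in_cnt A N : Z.of_nat (count_in A N) = cnt A (- Z.of_nat N) (Z.of_nat N + 1).
Proof.
  unfold count_in, cnt.
  replace (Z.to_nat (Z.of_nat N + 1 - - Z.of_nat N)) with (2 * N + 1)%nat by lia.
  f_equal. generalize (2 * N + 1)%nat as n.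
  induction n as [|n IH]; [reflexivity|].
  rewrite seq_S, map_app, filter_app, length_app, IH. cbn.
  replace (Z.of_nat n - Z.of_nat N) with (- Z.of_nat N + Z.of_nat n) by lia.
  destruct (A _); cbn; lia.
Qed.

Lemma cnt_windows_le f L c s t : 0 < L -> (forall x, cnt f x (x + L) <= c) -> s <= t ->
  L * cnt f s t <= c * (t - s) + c * L.
Proof.
  intros HL Hwin. revert s t. apply (interval_ind (fun s t => s <= t -> _)). intros s t IH Hst.
  assert (Hc : 0 <= c) by (pose proof (cnt_nonneg f s (s + L)); specialize (Hwin s); lia).
  destruct (Z_lt_le_dec (t - s) L) as [Hshort|Hlong].
  - pose proof (cnt_mono f s t s (s + L) ltac:(lia) Hst ltac:(lia)).
    specialize (Hwin s). nia.
  - rewrite (cnt_split f s (s + L) t) by lia.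
    specialize (IH (s + L) t ltac:(lia) ltac:(lia)). specialize (Hwin s). nia.
Qed.

Lemma cnt_windows_ge f L c s t : 0 < L -> 0 <= c -> (forall x, c <= cnt f x (x + L)) -> s <= t ->
  c * (t - s) - c * L <= L * cnt f s t.
Proof.
  intros HL Hc Hwin. revert s t. apply (interval_ind (fun s t => s <= t -> _)). intros s t IH Hst.
  pose proof (cnt_nonneg f s t).
  destruct (Z_lt_le_dec (t - s) L) as [Hshort|Hlong]; [nia|].
  rewrite (cnt_split f s (s + L) t) by lia.
  specialize (IH (s + L) t ltac:(lia) ltac:(lia)). specialize (Hwin s). nia.
Qed.

Definition separated_on (w : Z) (h : zset) (a b : Z) : Prop :=
  forall x y, a <= x -> x < y -> y < b -> h x = true -> h y = true -> w <= y - x.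

Lemma cnt_separated_on w h a b : 0 < w -> separated_on w h a b -> a <= b ->
  w * cnt h a b <= b - a + w - 1.
Proof.
  intros Hw. revert a b. apply (interval_ind (fun a b => separated_on w h a b -> a <= b -> _)).
  intros a b IH Hsep Hab.
  destruct (Z.eq_dec a b) as [<-|Hne]; [rewrite cnt_empty by lia; lia|].
  rewrite (cnt_split h a (a + 1) b), cnt_single by lia.
  assert (Hsub : forall a', a <= a' -> separated_on w h a' b)
    by (intros a' Ha' x y Hx; apply Hsep; lia).
  destruct (h a) eqn:Ha.
  - assert (Hgap : forall i, a + 1 <= i < Z.min b (a + w) -> h i = false).
    { intros i Hi. destruct (h i) eqn:Hhi; [|reflexivity].
      specialize (Hsep a i ltac:(lia) ltac:(lia) ltac:(lia) Ha Hhi). lia. }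
    destruct (Z_le_gt_dec b (a + w)) as [Hb|Hb].
    + rewrite cnt_zero by (intros i Hi; apply Hgap; lia). lia.
    + rewrite (cnt_split h (a + 1) (a + w) b), cnt_zero by (try intros i Hi; try apply Hgap; lia).
      specialize (IH (a + w) b ltac:(lia) (Hsub (a + w) ltac:(lia)) ltac:(lia)). lia.
  - specialize (IH (a + 1) b ltac:(lia) (Hsub (a + 1) ltac:(lia)) ltac:(lia)). lia.
Qed.

Definition spaced (h : zset) : Prop :=
  forall x, h x = true -> h (x + 1) = false /\ h (x + 2) = false.

Lemma spaced_separated_on h a b : spaced h -> separated_on 3 h a b.
Proof.
  intros Hsp x y _ Hxy _ Hx Hy. destruct (Hsp x Hx) as [H1 H2].
  destruct (Z_le_gt_dec 3 (y - x)) as [|Hclose]; [assumption|].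
  assert (y = x + 1 \/ y = x + 2) as [-> | ->] by lia; congruence.
Qed.

Lemma cnt_spaced h a b : spaced h -> a <= b -> 3 * cnt h a b <= b - a + 2.
Proof.
  intros Hsp Hab. pose proof (cnt_separated_on 3 h a b ltac:(lia) (spaced_separated_on h a b Hsp) Hab).
  lia.
Qed.

Lemma cnt_spaced_even h a b : spaced h -> a <= b ->
  (forall i, a <= i < b -> h i = true -> i mod 2 = 0) -> 4 * cnt h a b <= b - a + 3.
Proof.
  intros Hsp Hab Heven.
  enough (separated_on 4 h a b) by (pose proof (cnt_separated_on 4 h a b ltac:(lia) H Hab); lia).
  intros x y Ha Hxy Hb Hx Hy.
  pose proof (spaced_separated_on h a b Hsp x y Ha Hxy Hb Hx Hy).
  pose proof (Heven x ltac:(lia) Hx). pose proof (Heven y ltac:(lia) Hy).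
  Z.div_mod_to_equations. lia.
Qed.

Lemma cnt_after_hit h j b : spaced h -> h j = true -> b <= j + 3 -> cnt h (j + 1) b = 0.
Proof.
  intros Hsp Hj Hb. destruct (Hsp j Hj) as [H1 H2].
  apply cnt_zero. intros i Hi. assert (i = j + 1 \/ i = j + 2) as [-> | ->] by lia; assumption.
Qed.

Lemma last_witness (P : Z -> bool) s t :
  (forall i, s <= i < t -> P i = false) \/
  exists j, s <= j < t /\ P j = true /\ forall i, j < i < t -> P i = false.
Proof.
  revert s t. apply interval_ind. intros s t IH.
  destruct (Z_lt_le_dec s t) as [Hst|Hts]; [|left; lia].
  destruct (P (t - 1)) eqn:Hlast.
  - right. exists (t - 1). split; [lia|split; [assumption|lia]].
  - destruct (IH s (t - 1) ltac:(lia)) as [Hnone|(j & Hj & Pj & Hafter)].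
    + left. intros i Hi. destruct (Z.eq_dec i (t - 1)) as [->|]; [assumption|apply Hnone; lia].
    + right. exists j. split; [lia|split; [assumption|]].
      intros i Hi. destruct (Z.eq_dec i (t - 1)) as [->|]; [assumption|apply Hafter; lia].
Qed.

Lemma split_at_last_odd_hit h s u : spaced h -> s <= u ->
  4 * cnt h s u <= u - s + 3 \/
  exists j, s <= j < u /\ h j = true /\ j mod 2 = 1 /\ 4 * cnt h (j + 1) u <= u - j.
Proof.
  intros Hsp Hsu.
  assert (Heven_of : forall i, (h i && (i mod 2 =? 1))%bool = false -> h i = true -> i mod 2 = 0).
  { intros i Hi Hhi. rewrite Hhi in Hi. apply Z.eqb_neq in Hi.
    pose proof (Z.mod_pos_bound i 2 ltac:(lia)). lia. }
  destruct (last_witness (fun i => (h i && (i mod 2 =? 1))%bool) s u)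
    as [Hnone|(j & Hj & Pj & Hafter)].
  - left. apply cnt_spaced_even; [assumption..|]. intros i Hi. apply Heven_of, Hnone, Hi.
  - right. apply andb_prop in Pj as [Hhj Hodd]. apply Z.eqb_eq in Hodd.
    exists j. split; [assumption|split; [assumption|split; [assumption|]]].
    destruct (Z_le_gt_dec u (j + 3)) as [Hshort|Hlong].
    + rewrite cnt_after_hit by assumption. lia.
    + rewrite (cnt_split h (j + 1) (j + 3) u), cnt_after_hit by (assumption || lia).
      pose proof (cnt_spaced_even h (j + 3) u Hsp ltac:(lia)
        ltac:(intros i Hi; apply Heven_of, Hafter; lia)). lia.
Qed.

Section Echoes.

Variables (h : zset) (q : Z).
Hypotheses (Hq : 1 <= q) (Hq_odd : q mod 2 = 1) (Hsp : spaced h)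
  (Hecho : forall j, j mod 2 = 1 -> h j = true -> h (j - (3 * q + 2)) = true).

Let C := (q + 1) * (3 * q + 5).

Lemma cnt_upto_odd_hit s j : s <= j ->
  (s <= j - (3 * q + 2) ->
   (3 * q + 5) * cnt h s (j - (3 * q + 2)) <= (q + 1) * (j - (3 * q + 2) - s) + C) ->
  (3 * q + 5) * cnt h s (j + 1) <= (q + 1) * (j + 3 - s) + C.
Proof.
  intros Hsj Hprefix. unfold C in *.
  destruct (Z_le_gt_dec s (j - (3 * q + 2))) as [Hlong|Hshort].
  - rewrite (cnt_split h s (j - (3 * q + 2)) (j + 1)) by lia.
    pose proof (cnt_spaced h (j - (3 * q + 2)) (j + 1) Hsp ltac:(lia)).
    specialize (Hprefix Hlong). nia.
  - pose proof (cnt_spaced h s (j + 1) Hsp ltac:(lia)). pose proof (cnt_nonneg h s (j + 1)). nia.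
Qed.

Lemma cnt_upto_even_hit s t : s <= t -> h t = true -> t mod 2 = 0 ->
  (3 * q + 5) * cnt h s t <= (q + 1) * (t - s) + C.
Proof.
  revert s t. apply (interval_ind (fun s t => s <= t -> h t = true -> t mod 2 = 0 -> _)).
  intros s t IH Hst Ht Ht_even. unfold C in *.
  pose proof (cnt_nonneg h s t).
  destruct (split_at_last_odd_hit h s (t + 1) Hsp ltac:(lia))
    as [Heven|(j & Hj & Hhj & Hj_odd & Htail)].
  - rewrite (cnt_split h s t (t + 1)), cnt_single, Ht in Heven by lia. nia.
  - assert (Hjt : j + 3 <= t).
    { destruct (Hsp j Hhj). assert (j <> t) by congruence.
      assert (t <> j + 1 /\ t <> j + 2) by (split; intros ->; congruence). lia. }
    rewrite (cnt_split h (j + 1) t (t + 1)), cnt_single, Ht in Htail by lia.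
    pose proof (cnt_nonneg h (j + 1) t).
    assert (Hhead := cnt_upto_odd_hit s j ltac:(lia)).
    rewrite (cnt_split h s (j + 1) t) by lia.
    enough ((3 * q + 5) * cnt h s (j + 1) <= (q + 1) * (j + 3 - s) + C) by (unfold C in *; nia).
    apply Hhead. intros Hlong.
    apply IH; [lia | lia | apply Hecho; assumption |].
    Z.div_mod_to_equations. lia.
Qed.

Lemma cnt_echo_bound s t : s <= t -> (3 * q + 5) * cnt h s t <= (q + 1) * (t - s) + 3 * (q + 1) + C.
Proof.
  intros Hst. unfold C.
  pose proof (cnt_nonneg h s t).
  destruct (split_at_last_odd_hit h s t Hsp Hst) as [Heven|(j & Hj & Hhj & Hj_odd & Htail)].
  - nia.
  - pose proof (cnt_nonneg h (j + 1) t).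
    assert (Hhead := cnt_upto_odd_hit s j ltac:(lia)).
    rewrite (cnt_split h s (j + 1) t) by lia.
    enough ((3 * q + 5) * cnt h s (j + 1) <= (q + 1) * (j + 3 - s) + C) by (unfold C in *; nia).
    apply Hhead. intros Hlong. apply cnt_upto_even_hit; [lia | apply Hecho; assumption |].
    Z.div_mod_to_equations. lia.
Qed.

End Echoes.

Section Forbidden.

Variables (h : zset) (q : Z).
Hypotheses (Hq : 1 <= q) (Hsp : spaced h) (Hfar : forall x, h x = true -> h (x + 3 * q) = false).

Lemma cnt_window_forbidden a : cnt h a (a + (3 * q + 1)) <= q.
Proof.
  destruct (h a) eqn:Ha.
  - rewrite (cnt_split h a (a + 3 * q) (a + (3 * q + 1))) by lia.
    replace (a + (3 * q + 1)) with (a + 3 * q + 1) by lia.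
    rewrite cnt_single, Hfar by assumption.
    pose proof (cnt_spaced h a (a + 3 * q) Hsp ltac:(lia)). lia.
  - rewrite (cnt_split h a (a + 1) (a + (3 * q + 1))), cnt_single, Ha by lia.
    pose proof (cnt_spaced h (a + 1) (a + (3 * q + 1)) Hsp ltac:(lia)). lia.
Qed.

Lemma cnt_forbidden_bound s t : s <= t -> (3 * q + 1) * cnt h s t <= q * (t - s) + q * (3 * q + 1).
Proof. apply cnt_windows_le; [lia | exact cnt_window_forbidden]. Qed.

End Forbidden.

Definition Sk (k : Z) : list Z := 1 :: k :: (k + 1) :: nil.

Lemma independent_excl S A x y : independent S A -> A x = true -> In (Z.abs (x - y)) S ->
  A y = false.
Proof. intros HA Hx Hin. destruct (A y) eqn:Hy; [exfalso; exact (HA x y Hx Hy Hin) | reflexivity]. Qed.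

Lemma independent_intro k A :
  (forall x y, A x = true -> A y = true -> y - x = 1 \/ y - x = k \/ y - x = k + 1 -> False) ->
  independent (Sk k) A.
Proof.
  intros Hdiff i j Hi Hj Hin. cbn in Hin.
  destruct (Z_le_gt_dec i j); [apply (Hdiff i j Hi Hj) | apply (Hdiff j i Hj Hi)]; lia.
Qed.

Definition interleave (A : zset) (k z : Z) : bool :=
  if z mod 2 =? 0 then A (z / 2 + k) else A (z / 2).

Lemma interleave_even A k m : interleave A k (2 * m) = A (m + k).
Proof.
  unfold interleave. replace ((2 * m) mod 2) with 0 by (Z.div_mod_to_equations; lia).
  now replace (2 * m / 2) with m by (Z.div_mod_to_equations; lia).
Qed.

Lemma interleave_odd A k m : interleave A k (2 * m + 1) = A m.
Proof.
  unfold interleave. replace ((2 * m + 1) mod 2) with 1 by (Z.div_mod_to_equations; lia).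
  now replace ((2 * m + 1) / 2) with m by (Z.div_mod_to_equations; lia).
Qed.

Lemma Z_even_or_odd x : exists m, x = 2 * m \/ x = 2 * m + 1.
Proof. exists (x / 2). Z.div_mod_to_equations. lia. Qed.

Lemma interleave_echo A k j : j mod 2 = 1 -> interleave A k j = true ->
  interleave A k (j - (2 * k + 1)) = true.
Proof.
  intros Hj. destruct (Z_even_or_odd j) as [m [-> | ->]].
  - Z.div_mod_to_equations. lia.
  - replace (2 * m + 1 - (2 * k + 1)) with (2 * (m - k)) by lia.
    rewrite interleave_odd, interleave_even. now replace (m - k + k) with m by lia.
Qed.

Lemma cnt_interleave A k u v : u <= v ->
  cnt (interleave A k) (2 * u) (2 * v) = cnt A u v + cnt A (u + k) (v + k).
Proof.
  revert u v. apply (interval_ind (fun u v => u <= v -> _)). intros u v IH Huv.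
  destruct (Z.eq_dec u v) as [<-|Hne]; [rewrite !cnt_empty by lia; lia|].
  rewrite (cnt_split _ (2 * u) (2 * u + 1) (2 * v)), (cnt_split _ (2 * u + 1) (2 * (u + 1)) (2 * v)),
    (cnt_split A u (u + 1) v), (cnt_split A (u + k) (u + k + 1) (v + k)) by lia.
  replace (2 * (u + 1)) with (2 * u + 1 + 1) by lia.
  rewrite !cnt_single, interleave_even, interleave_odd.
  replace (2 * u + 1 + 1) with (2 * (u + 1)) by lia.
  rewrite (IH (u + 1) v ltac:(lia) ltac:(lia)).
  replace (u + 1 + k) with (u + k + 1) by lia.
  destruct (A u), (A (u + k)); lia.
Qed.

Lemma cnt_shift_le A u v d : 0 <= d -> u <= v -> cnt A u v <= cnt A (u + d) (v + d) + d.
Proof.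
  intros Hd Huv. destruct (Z_le_gt_dec v (u + d)).
  - pose proof (cnt_le_length A u v Huv). pose proof (cnt_nonneg A (u + d) (v + d)). lia.
  - rewrite (cnt_split A u (u + d) v) by lia.
    pose proof (cnt_le_length A u (u + d) ltac:(lia)).
    pose proof (cnt_mono A (u + d) v (u + d) (v + d) ltac:(lia) ltac:(lia) ltac:(lia)). lia.
Qed.

Lemma cnt_le_interleave A k u v : 0 <= k -> u <= v ->
  2 * cnt A u v <= cnt (interleave A k) (2 * u) (2 * v) + k.
Proof.
  intros Hk Huv. rewrite cnt_interleave by assumption.
  pose proof (cnt_shift_le A u v k Hk Huv). lia.
Qed.

Section IndependentInterleave.

Variables (A : zset) (k : Z).
Hypotheses (Hk : 0 <= k) (HA : independent (Sk k) A).

Lemma interleave_spaced : spaced (interleave A k).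
Proof.
  intros x Hx. destruct (Z_even_or_odd x) as [m [-> | ->]].
  - replace (2 * m + 2) with (2 * (m + 1)) by lia.
    rewrite interleave_even in Hx. rewrite interleave_odd, interleave_even.
    split; apply (independent_excl (Sk k) A (m + k)); (assumption || (cbn [In Sk]; lia)).
  - replace (2 * m + 1 + 1) with (2 * (m + 1)) by lia.
    replace (2 * m + 1 + 2) with (2 * (m + 1) + 1) by lia.
    rewrite interleave_odd in Hx. rewrite interleave_odd, interleave_even.
    split; apply (independent_excl (Sk k) A m); (assumption || (cbn [In Sk]; lia)).
Qed.

Lemma interleave_far x : interleave A k x = true -> interleave A k (x + 2 * k) = false.
Proof.
  intros Hx. destruct (Z_even_or_odd x) as [m [-> | ->]].
  - replace (2 * m + 2 * k) with (2 * (m + k)) by lia.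
    rewrite interleave_even in *. apply (independent_excl (Sk k) A (m + k)); (assumption || (cbn [In Sk]; lia)).
  - replace (2 * m + 1 + 2 * k) with (2 * (m + k) + 1) by lia.
    rewrite interleave_odd in *. apply (independent_excl (Sk k) A m); (assumption || (cbn [In Sk]; lia)).
Qed.

End IndependentInterleave.

Lemma cnt_mod3 c a n : 0 <= c < 3 -> a mod 3 = 0 -> 0 <= n ->
  cnt (fun x => x mod 3 =? c) a (a + 3 * n) = n.
Proof.
  intros Hc Ha. revert n. apply natlike_ind.
  - apply cnt_empty. lia.
  - intros n Hn IH.
    replace (a + 3 * Z.succ n) with (a + 3 * n + 1 + 1 + 1) by lia.
    rewrite (cnt_split _ a (a + 3 * n) _), (cnt_split _ (a + 3 * n) (a + 3 * n + 1) _),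
      (cnt_split _ (a + 3 * n + 1) (a + 3 * n + 1 + 1) _), IH, !cnt_single by lia.
    replace ((a + 3 * n) mod 3) with 0 by (Z.div_mod_to_equations; lia).
    replace ((a + 3 * n + 1) mod 3) with 1 by (Z.div_mod_to_equations; lia).
    replace ((a + 3 * n + 1 + 1) mod 3) with 2 by (Z.div_mod_to_equations; lia).
    assert (c = 0 \/ c = 1 \/ c = 2) as [-> | [-> | ->]] by lia; cbn; lia.
Qed.

Lemma mod_add_cases p x d : 0 < d < p ->
  (x + d) mod p = x mod p + d \/ (x + d) mod p = x mod p + d - p.
Proof.
  intros Hd. pose proof (Z.mod_pos_bound x p ltac:(lia)).
  rewrite <- Z.add_mod_idemp_l by lia.
  destruct (Z_lt_le_dec (x mod p + d) p).
  - left. apply Z.mod_small. lia.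
  - right. replace (x mod p + d) with (x mod p + d - p + 1 * p) at 1 by lia.
    rewrite Z.mod_add by lia. apply Z.mod_small. lia.
Qed.

Definition multiples3 (x : Z) : bool := x mod 3 =? 0.

Lemma multiples3_independent m : independent (Sk (3 * m + 1)) multiples3.
Proof.
  apply independent_intro. intros x y Hx Hy Hd. unfold multiples3 in *.
  apply Z.eqb_eq in Hx, Hy. Z.div_mod_to_equations. lia.
Qed.

Definition set_mod2 (m x : Z) : bool :=
  let r := x mod (3 * m + 4) in (r mod 3 =? 0) && (r <? 3 * m + 3).

Definition set_mod0 (m x : Z) : bool :=
  let r := x mod (6 * m + 1) in if r <? 3 * m then r mod 3 =? 0 else r mod 3 =? 2.

Lemma set_mod2_independent m : 0 <= m -> independent (Sk (3 * m + 2)) (set_mod2 m).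
Proof.
  intros Hm. apply independent_intro. intros x y Hx Hy Hd. unfold set_mod2 in *.
  apply andb_prop in Hx as [Hx3 Hx], Hy as [Hy3 Hy].
  apply Z.eqb_eq in Hx3, Hy3. apply Z.ltb_lt in Hx, Hy.
  pose proof (Z.mod_pos_bound x (3 * m + 4) ltac:(lia)).
  replace y with (x + (y - x)) in * by lia.
  destruct (mod_add_cases (3 * m + 4) x (y - x) ltac:(lia)) as [E|E]; rewrite E in *;
    set (r := x mod (3 * m + 4)) in *; clearbody r; Z.div_mod_to_equations; lia.
Qed.

Lemma set_mod0_independent m : 1 <= m -> independent (Sk (3 * m)) (set_mod0 m).
Proof.
  intros Hm. apply independent_intro. intros x y Hx Hy Hd. unfold set_mod0 in *.
  pose proof (Z.mod_pos_bound x (6 * m + 1) ltac:(lia)).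
  replace y with (x + (y - x)) in * by lia.
  destruct (mod_add_cases (6 * m + 1) x (y - x) ltac:(lia)) as [E|E]; rewrite E in *;
    set (r := x mod (6 * m + 1)) in *; clearbody r;
    destruct (Z.ltb_spec r (3 * m)), (Z.ltb_spec (r + (y - x)) (3 * m)),
      (Z.ltb_spec (r + (y - x) - (6 * m + 1)) (3 * m));
    apply Z.eqb_eq in Hx, Hy; Z.div_mod_to_equations; lia.
Qed.

Lemma cnt_set_mod2 m : 0 <= m -> cnt (set_mod2 m) 0 (3 * m + 4) = m + 1.
Proof.
  intros Hm. rewrite (cnt_split _ 0 (3 * m + 3) (3 * m + 4)) by lia.
  replace (3 * m + 4) with (3 * m + 3 + 1) by lia.
  rewrite cnt_single.
  replace (set_mod2 m (3 * m + 3)) with false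
    by (unfold set_mod2; now rewrite (Z.mod_small (3 * m + 3)), Z.ltb_irrefl, Bool.andb_false_r by lia).
  rewrite Z.add_0_r.
  rewrite (cnt_ext _ (fun x => x mod 3 =? 0)).
  - replace (3 * m + 3) with (0 + 3 * (m + 1)) by lia. apply cnt_mod3; [lia | reflexivity | lia].
  - intros i Hi. unfold set_mod2. rewrite (Z.mod_small i) by lia.
    replace (i <? 3 * m + 3) with true by (symmetry; apply Z.ltb_lt; lia).
    apply Bool.andb_true_r.
Qed.

Lemma cnt_set_mod0 m : 1 <= m -> cnt (set_mod0 m) 0 (6 * m + 1) = 2 * m.
Proof.
  intros Hm.
  rewrite (cnt_split _ 0 (3 * m) (6 * m + 1)), (cnt_split _ (3 * m) (6 * m) (6 * m + 1)),
    cnt_single by lia.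
  replace (set_mod0 m (6 * m)) with false.
  2:{ unfold set_mod0. rewrite (Z.mod_small (6 * m)) by lia.
      replace (6 * m <? 3 * m) with false by (symmetry; apply Z.ltb_ge; lia).
      symmetry. apply Z.eqb_neq. Z.div_mod_to_equations. lia. }
  rewrite (cnt_ext _ (fun x => x mod 3 =? 0) 0 (3 * m)),
    (cnt_ext _ (fun x => x mod 3 =? 2) (3 * m) (6 * m)).
  - replace (3 * m) with (0 + 3 * m) at 1 by lia.
    replace (6 * m) with (3 * m + 3 * m) by lia.
    rewrite !cnt_mod3 by (Z.div_mod_to_equations; lia). lia.
  - intros i Hi. unfold set_mod0. rewrite (Z.mod_small i) by lia.
    now replace (i <? 3 * m) with false by (symmetry; apply Z.ltb_ge; lia).
  - intros i Hi. unfold set_mod0. rewrite (Z.mod_small i) by lia.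
    now replace (i <? 3 * m) with true by (symmetry; apply Z.ltb_lt; lia).
Qed.

Lemma periodic_cnt_window A (p : Z) : (forall x, A (x + p) = A x) ->
  forall x, cnt A x (x + p) = cnt A 0 p.
Proof.
  intros Hper.
  assert (Hstep : forall x, cnt A (x + 1) (x + 1 + p) = cnt A x (x + p)).
  { intros x. destruct (Z_le_gt_dec 0 p) as [Hp|Hp].
    - replace (x + 1 + p) with (x + p + 1) by lia.
      pose proof (cnt_split A x (x + 1) (x + p + 1) ltac:(lia)) as E1.
      pose proof (cnt_split A x (x + p) (x + p + 1) ltac:(lia)) as E2.
      rewrite cnt_single in E1. rewrite cnt_single, Hper in E2. lia.
    - rewrite !cnt_empty by lia. reflexivity. }
  apply Z.peano_ind.
  - now rewrite Z.add_0_l.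
  - intros x IH. rewrite <- Z.add_1_r, Hstep. exact IH.
  - intros x IH. rewrite <- IH, <- (Hstep (Z.pred x)). f_equal; lia.
Qed.


Open Scope R_scope.

Lemma is_lim_seq_decay (r c : R) : is_lim_seq (fun N : nat => r + c * / INR (2 * N + 1)) r.
Proof.
  assert (Hden : is_lim_seq (fun N : nat => INR (2 * N + 1)) p_infty).
  { apply is_lim_seq_le_p_loc with INR; [|exact is_lim_seq_INR].
    exists 0%nat. intros n _. apply le_INR. lia. }
  pose proof (is_lim_seq_plus' _ _ r (c * 0) (is_lim_seq_const r)
    (is_lim_seq_scal_l _ c _ (is_lim_seq_inv _ _ Hden ltac:(discriminate)))) as Hlim.
  now rewrite Rmult_0_r, Rplus_0_r in Hlim.
Qed.

Lemma density_eq_error A N (Nn D : Z) : IZR D <> 0 ->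
  INR (count_in A N) / INR (2 * N + 1) =
  IZR Nn / IZR D +
  IZR (D * cnt A (- Z.of_nat N) (Z.of_nat N + 1) - Nn * (2 * Z.of_nat N + 1)) / IZR D
    * / INR (2 * N + 1).
Proof.
  intros HD. rewrite INR_IZR_INZ, count_in_cnt, (INR_IZR_INZ (2 * N + 1)).
  replace (Z.of_nat (2 * N + 1)) with (2 * Z.of_nat N + 1)%Z by lia.
  assert (IZR (2 * Z.of_nat N + 1) <> 0) by (apply not_0_IZR; lia).
  rewrite minus_IZR, !mult_IZR. field. auto.
Qed.

Lemma density_le_of_cnt A (Nn D C : Z) : (0 < D)%Z ->
  (forall N : nat,
     D * cnt A (- Z.of_nat N) (Z.of_nat N + 1) <= Nn * (2 * Z.of_nat N + 1) + C)%Z ->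
  Rbar_le (density A) (IZR Nn / IZR D).
Proof.
  intros HD Hcnt. assert (HDr : 0 < IZR D) by (apply IZR_lt; exact HD).
  unfold density.
  rewrite <- (is_LimSup_seq_unique _ _
    (is_lim_LimSup_seq _ _ (is_lim_seq_decay (IZR Nn / IZR D) (IZR C / IZR D)))).
  apply LimSup_le. exists 0%nat. intros N _.
  rewrite (density_eq_error A N Nn D) by lra.
  apply Rplus_le_compat_l, Rmult_le_compat_r.
  - apply Rlt_le, Rinv_0_lt_compat, lt_0_INR. lia.
  - apply Rmult_le_compat_r; [apply Rlt_le, Rinv_0_lt_compat; lra|].
    apply IZR_le. specialize (Hcnt N). lia.
Qed.

Lemma density_ge_of_cnt A (Nn D C : Z) : (0 < D)%Z ->
  (forall N : nat,
     Nn * (2 * Z.of_nat N + 1) - C <= D * cnt A (- Z.of_nat N) (Z.of_nat N + 1))%Z ->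
  Rbar_le (IZR Nn / IZR D) (density A).
Proof.
  intros HD Hcnt. assert (HDr : 0 < IZR D) by (apply IZR_lt; exact HD).
  unfold density.
  rewrite <- (is_LimSup_seq_unique _ _
    (is_lim_LimSup_seq _ _ (is_lim_seq_decay (IZR Nn / IZR D) (IZR (- C) / IZR D)))).
  apply LimSup_le. exists 0%nat. intros N _.
  rewrite (density_eq_error A N Nn D) by lra.
  apply Rplus_le_compat_l, Rmult_le_compat_r.
  - apply Rlt_le, Rinv_0_lt_compat, lt_0_INR. lia.
  - apply Rmult_le_compat_r; [apply Rlt_le, Rinv_0_lt_compat; lra|].
    apply IZR_le. specialize (Hcnt N). lia.
Qed.

Lemma density_le_of_interleave A k (Nn D C : Z) : (0 <= k)%Z -> (0 < D)%Z ->
  (forall s t, s <= t -> D * cnt (interleave A k) s t <= Nn * (t - s) + C)%Z ->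
  Rbar_le (density A) (IZR Nn / IZR D).
Proof.
  intros Hk HD Hbound. apply (density_le_of_cnt A Nn D (Z.abs (C + D * k))); [assumption|].
  intros N.
  pose proof (cnt_le_interleave A k (- Z.of_nat N) (Z.of_nat N + 1) Hk ltac:(lia)).
  pose proof (Hbound (2 * - Z.of_nat N) (2 * (Z.of_nat N + 1)) ltac:(lia))%Z.
  nia.
Qed.

Lemma density_ge_periodic A (p : Z) : (0 < p)%Z -> (forall x, A (x + p)%Z = A x) ->
  Rbar_le (IZR (cnt A 0 p) / IZR p) (density A).
Proof.
  intros Hp Hper. set (c := cnt A 0 p).
  apply (density_ge_of_cnt A c p (c * p)); [assumption|]. intros N.
  pose proof (cnt_windows_ge A p c (- Z.of_nat N) (Z.of_nat N + 1) Hp (cnt_nonneg A 0 p)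
    ltac:(intros x; rewrite (periodic_cnt_window A p Hper); lia) ltac:(lia)).
  lia.
Qed.

Lemma is_independence_ratio_intro S (r : R) :
  (forall A, independent S A -> Rbar_le (density A) r) ->
  (exists A, independent S A /\ Rbar_le r (density A)) ->
  is_independence_ratio S r.
Proof.
  intros Hup (A0 & HA0 & Hlow). split.
  - intros x (A & HA & <-). exact (Hup A HA).
  - intros b Hb. apply Rbar_le_trans with (density A0); [exact Hlow|].
    apply Hb. now exists A0.
Qed.

Lemma ratio_mod1 k : (0 <= k)%Z -> (k mod 3 = 1)%Z -> is_independence_ratio (Sk k) (1 / 3).
Proof.
  intros Hk Hmod.
  assert (Hm : k = (3 * (k / 3) + 1)%Z) by (Z.div_mod_to_equations; lia).
  apply is_independence_ratio_intro.
  - intros A HA. apply (density_le_of_interleave A k 1 3 2); [lia | lia |].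
    intros s t Hst. pose proof (cnt_spaced _ s t (interleave_spaced A k Hk HA) Hst). lia.
  - exists multiples3. split; [rewrite Hm; apply multiples3_independent|].
    exact (density_ge_periodic multiples3 3 ltac:(lia)
      (fun x => ltac:(unfold multiples3; now rewrite <- (Z.mod_add x 1 3)))).
Qed.

Lemma ratio_mod2 k : (0 <= k)%Z -> (k mod 3 = 2)%Z ->
  is_independence_ratio (Sk k) ((IZR k + 1) / (3 * IZR k + 6)).
Proof.
  intros Hk Hmod. set (m := (k / 3)%Z).
  assert (Hm : k = (3 * m + 2)%Z) by (unfold m; Z.div_mod_to_equations; lia).
  assert (0 <= IZR m) by (apply IZR_le; lia).
  replace ((IZR k + 1) / (3 * IZR k + 6)) with (IZR (m + 1) / IZR (3 * m + 4))
    by (rewrite Hm; repeat (rewrite plus_IZR || rewrite mult_IZR); field; lra).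
  apply is_independence_ratio_intro.
  - intros A HA.
    set (q := (2 * m + 1)%Z).
    replace (IZR (m + 1) / IZR (3 * m + 4)) with (IZR (q + 1) / IZR (3 * q + 5))
      by (unfold q; repeat (rewrite plus_IZR || rewrite mult_IZR); field; lra).
    apply (density_le_of_interleave A k (q + 1) (3 * q + 5) (3 * (q + 1) + (q + 1) * (3 * q + 5)));
      [lia | lia |].
    intros s t Hst. rewrite Z.add_assoc. apply cnt_echo_bound; [lia | unfold q; Z.div_mod_to_equations; lia
      | apply interleave_spaced; assumption | | assumption].
    intros j Hj Hhj. replace (3 * q + 2)%Z with (2 * k + 1)%Z by lia.
    apply interleave_echo; assumption.
  - exists (set_mod2 m). split; [rewrite Hm; apply set_mod2_independent; lia|].
    rewrite <- (cnt_set_mod2 m) by lia. apply density_ge_periodic; [lia|].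
    intros x. unfold set_mod2. now rewrite <- (Z.mod_add x 1 (3 * m + 4)), Z.mul_1_l by lia.
Qed.

Lemma ratio_mod0 k : (3 <= k)%Z -> (k mod 3 = 0)%Z ->
  is_independence_ratio (Sk k) (2 * IZR k / (6 * IZR k + 3)).
Proof.
  intros Hk Hmod. set (m := (k / 3)%Z).
  assert (Hm : k = (3 * m)%Z) by (unfold m; Z.div_mod_to_equations; lia).
  assert (1 <= IZR m) by (apply IZR_le; lia).
  replace (2 * IZR k / (6 * IZR k + 3)) with (IZR (2 * m) / IZR (3 * (2 * m) + 1))
    by (rewrite Hm; repeat (rewrite plus_IZR || rewrite mult_IZR); field; lra).
  apply is_independence_ratio_intro.
  - intros A HA.
    apply (density_le_of_interleave A k (2 * m) (3 * (2 * m) + 1) (2 * m * (3 * (2 * m) + 1)));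
      [lia | lia |].
    apply cnt_forbidden_bound; [lia | apply interleave_spaced; [lia | assumption] |].
    intros x Hx. replace (x + 3 * (2 * m))%Z with (x + 2 * k)%Z by lia.
    apply (interleave_far A k); [lia | assumption..].
  - exists (set_mod0 m). split; [rewrite Hm; apply set_mod0_independent; lia|].
    replace (3 * (2 * m) + 1)%Z with (6 * m + 1)%Z by lia.
    rewrite <- (cnt_set_mod0 m) by lia. apply density_ge_periodic; [lia|].
    intros x. unfold set_mod0. now rewrite <- (Z.mod_add x 1 (6 * m + 1)), Z.mul_1_l by lia.
Qed.

Theorem theorem35 (k : Z) (hk : (2 <= k)%Z) :
  is_independence_ratio (1%Z :: k :: (k + 1)%Z :: nil)
    (if Z.eqb (Z.modulo k 3) 0 then 2 * IZR k / (6 * IZR k + 3)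
     else if Z.eqb (Z.modulo k 3) 1 then 1 / 3
     else (IZR k + 1) / (3 * IZR k + 6)).
Proof.
  change (1%Z :: k :: (k + 1)%Z :: nil) with (Sk k).
  pose proof (Z.mod_pos_bound k 3 ltac:(lia)).
  destruct (Z.eqb_spec (k mod 3) 0) as [H0|H0].
  - apply ratio_mod0; [Z.div_mod_to_equations; lia | assumption].
  - destruct (Z.eqb_spec (k mod 3) 1) as [H1|H1].
    + apply ratio_mod1; [lia | assumption].
    + apply ratio_mod2; lia.
Qed.
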